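(* Let $\beta=\gamma^2/(2\kappa\sigma^2)$ and define, for $t>0$ and $z\ge c$, $$U(t,z)=\frac1\beta\log\Bigg(\mathrm{erf}\Big(\frac{z-c}{\sigma\sqrt{2t}}\Big)+e^{-\beta(z-c)+\beta^2\sigma^2t/2}\bigg[1-\mathrm{erf}\Big(\frac{z-c}{\sigma\sqrt{2t}}-\frac{\beta\sigma\sqrt t}{\sqrt2}\Big)\bigg]\Bigg).$$ Then $U$ satisfies $$\partial_t U(t,z)=\frac{\sigma^2}2\partial_{zz}U(t,z)+\frac{\gamma^2}{4\kappa}\big(\partial_zU(t,z)\big)^2\qquad\text{in }(0,T]\times[c,\infty),$$ with boundary condition $\partial_zU(t,c)=-1$ for all $t\in(0,T]$.
   Context: $\sigma,\gamma,\kappa,T>0$ and $c\in\mathbb R$ are constants; $\mathrm{erf}(x)=\frac{2}{\sqrt\pi}\int_0^xe^{-y^2}\,dy$ is the Gaussian error function. (This $U$ coincides with $\frac1\beta\log E[\exp(\beta\sigma L_t^{(z-c)/\sigma}(W))]$ for a standard Brownian motion $W$ with local time $L$.) *)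

From Stdlib Require Import Reals.
From Coquelicot Require Import Coquelicot.
Open Scope R_scope.

Definition erf (x : R) : R :=
  2 / sqrt PI * RInt (fun y => exp (- y ^ 2)) 0 x.

Definition beta (sigma gamma kappa : R) : R :=
  gamma ^ 2 / (2 * kappa * sigma ^ 2).

Definition U (sigma gamma kappa c : R) (t z : R) : R :=
  let b := beta sigma gamma kappa in
  / b * ln ( erf ((z - c) / (sigma * sqrt (2 * t)))
             + exp (- b * (z - c) + b ^ 2 * sigma ^ 2 * t / 2)
               * (1 - erf ((z - c) / (sigma * sqrt (2 * t))
                           - b * sigma * sqrt t / sqrt 2)) ).

Definition dtU (sigma gamma kappa c t z : R) : R :=
  Derive (fun s => U sigma gamma kappa c s z) t.
Definition dzU (sigma gamma kappa c t z : R) : R :=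
  Derive (fun y => U sigma gamma kappa c t y) z.
Definition dzzU (sigma gamma kappa c t z : R) : R :=
  Derive (fun y => dzU sigma gamma kappa c t y) z.

From Stdlib Require Import Reals Lra Psatz.
From Coquelicot Require Import Coquelicot.
Open Scope R_scope.

(* V := exp (beta U) is the sum of erf P, P = (z - c) / (sigma sqrt (2t)), and of the tilted
   term e^(-beta (z - c) + beta^2 sigma^2 t / 2) (1 - erf Q), Q = P - beta sigma sqrt (t / 2),
   both solutions of the heat equation V_t = sigma^2/2 V_zz.  The identity
   e^(-beta (z - c) + beta^2 sigma^2 t / 2) e^(-Q^2) = e^(-P^2) makes the erf' terms of
   V_z, V_zz and V_t collapse.  The Cole-Hopf transform U = ln V / beta turns the heat
   equation into the stated equation, as sigma^2 beta / 2 = gamma^2 / (4 kappa); it holds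
   for every real z, not only z >= c.  At z = c the erf P term vanishes, so
   V_z = -beta V there and U_z = -1.  The logarithm needs V > 0, which rests on
   |erf| <= 1: the function
   (int_0^y e^(-s^2) ds)^2 + int_0^1 e^(-y^2 (1 + u^2)) / (1 + u^2) du
   has zero derivative, hence equals its value pi/4 at y = 0. *)

Lemma continuous_gauss (x : R) : continuous (fun s => exp (- s ^ 2)) x.
Proof. apply (ex_derive_continuous (fun s => exp (- s ^ 2))); auto_derive; auto. Qed.

Lemma ex_RInt_gauss (a b : R) : ex_RInt (fun s => exp (- s ^ 2)) a b.
Proof. apply (@ex_RInt_continuous R_CompleteNormedModule); intros; apply continuous_gauss. Qed.

Definition gauss_int (y : R) : R := RInt (fun s => exp (- s ^ 2)) 0 y.

Lemma is_derive_gauss_int (y : R) : is_derive gauss_int y (exp (- y ^ 2)).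
Proof.
  apply (is_derive_RInt (fun s => exp (- s ^ 2)) gauss_int 0 y); [|apply continuous_gauss].
  apply filter_forall; intros; apply (@RInt_correct R_CompleteNormedModule), ex_RInt_gauss.
Qed.

Lemma gauss_int_rescale (y : R) :
  gauss_int y = y * RInt (fun u => exp (- (y * u) ^ 2)) 0 1.
Proof.
  assert (H := RInt_comp_lin (fun s => exp (- s ^ 2)) y 0 0 1 (ex_RInt_gauss _ _)).
  replace (y * 0 + 0) with 0 in H by ring; replace (y * 1 + 0) with y in H by ring.
  unfold gauss_int; rewrite <- H, <- (@RInt_scal R_CompleteNormedModule).
  - apply RInt_ext; intros u _; rewrite Rplus_0_r; reflexivity.
  - apply (@ex_RInt_continuous R_CompleteNormedModule); intros.
    apply (ex_derive_continuous (fun u => exp (- (y * u) ^ 2))); auto_derive; auto.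
Qed.

Definition gauss_tail (y : R) : R :=
  RInt (fun u => exp (- (y ^ 2 * (1 + u ^ 2))) / (1 + u ^ 2)) 0 1.

Lemma is_derive_gauss_tail (y : R) :
  is_derive gauss_tail y (- 2 * exp (- y ^ 2) * gauss_int y).
Proof.
  set (f := fun x u => exp (- (x ^ 2 * (1 + u ^ 2))) / (1 + u ^ 2)).
  set (df := fun x u => - 2 * x * exp (- (x * x * (1 + u * u)))).
  assert (Hf : forall x u, is_derive (fun x => f x u) x (df x u)).
  { intros x u; unfold f, df; auto_derive; [nra|].
    replace (x * (x * 1) * (1 + u * (u * 1))) with (x * x * (1 + u * u)) by ring; field; nra. }
  assert (Hdf : forall x u, Derive (fun x => f x u) x = df x u)
    by (intros; apply is_derive_unique, Hf).
  replace (- 2 * exp (- y ^ 2) * gauss_int y) with (RInt (fun u => Derive (fun x => f x u) y) 0 1).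
  - apply is_derive_RInt_param.
    + apply filter_forall; intros x u _; eexists; apply Hf.
    + intros u _; apply continuity_2d_pt_ext with df; [intros; symmetry; apply Hdf|].
      unfold df.
      repeat first
        [ apply continuity_2d_pt_mult | apply continuity_2d_pt_plus
        | apply continuity_2d_pt_opp | apply continuity_2d_pt_const
        | apply continuity_2d_pt_id1 | apply continuity_2d_pt_id2
        | apply continuity_1d_2d_pt_comp; [apply derivable_continuous_pt, derivable_pt_exp|] ].
    + apply filter_forall; intros x; apply (@ex_RInt_continuous R_CompleteNormedModule); intros u _.
      apply (ex_derive_continuous (f x)); unfold f; auto_derive; nra.
  - rewrite gauss_int_rescale, (RInt_ext _ (fun u => scal (- 2 * y * exp (- y ^ 2)) (exp (- (y * u) ^ 2)))).
    + rewrite (@RInt_scal R_CompleteNormedModule); [unfold scal; simpl; unfold mult; simpl; ring|].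
      apply (@ex_RInt_continuous R_CompleteNormedModule); intros.
      apply (ex_derive_continuous (fun u => exp (- (y * u) ^ 2))); auto_derive; auto.
    + intros u _; rewrite Hdf; unfold df, scal; simpl; unfold mult; simpl.
      rewrite (Rmult_assoc (- 2 * y)), <- exp_plus; do 3 f_equal; ring.
Qed.

Lemma gauss_int_0 : gauss_int 0 = 0.
Proof. exact (RInt_point 0 (fun s => exp (- s ^ 2))). Qed.

Lemma gauss_int_sqr_add_tail (y : R) : gauss_int y ^ 2 + gauss_tail y = PI / 4.
Proof.
  set (F := fun y => gauss_int y ^ 2 + gauss_tail y).
  assert (HF : forall x, is_derive F x zero).
  { intros x; unfold F; auto_derive.
    - split; [eexists; apply is_derive_gauss_int | split; [eexists; apply is_derive_gauss_tail | auto]].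
    - replace (Derive (fun y : R => gauss_int y) x) with (exp (- x ^ 2))
        by (symmetry; apply is_derive_unique, is_derive_gauss_int).
      replace (Derive (fun y : R => gauss_tail y) x) with (- 2 * exp (- x ^ 2) * gauss_int x)
        by (symmetry; apply is_derive_unique, is_derive_gauss_tail).
      unfold zero; simpl; ring. }
  assert (HF0 : F 0 = PI / 4).
  { assert (Hatan : is_RInt (fun u => / (1 + u²)) 0 1 (PI / 4)).
    { replace (PI / 4) with (minus (atan 1) (atan 0))
        by (unfold minus, plus, opp; simpl; rewrite atan_1, atan_0; ring).
      apply (is_RInt_derive atan); intros x _; [apply is_derive_atan|].
      apply (ex_derive_continuous (fun u => / (1 + u²))); auto_derive; unfold Rsqr; nra. }
    unfold F, gauss_tail; rewrite gauss_int_0, pow_ne_zero, Rplus_0_l by lia.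
    rewrite <- (is_RInt_unique _ _ _ _ Hatan); apply RInt_ext; intros x _.
    replace (- (0 * (1 + x ^ 2))) with 0 by ring.
    rewrite exp_0, Rsqr_pow2; apply Rmult_1_l. }
  rewrite <- HF0; fold (F y).
  destruct (Rtotal_order y 0) as [H | [H | H]].
  - apply (eq_is_derive F y 0 (fun x _ => HF x) H).
  - subst; reflexivity.
  - symmetry; apply (eq_is_derive F 0 y (fun x _ => HF x) H).
Qed.

Lemma gauss_tail_nonneg (y : R) : 0 <= gauss_tail y.
Proof.
  apply RInt_ge_0; [lra| |].
  - apply (@ex_RInt_continuous R_CompleteNormedModule); intros u _.
    apply (ex_derive_continuous (fun u => exp (- (y ^ 2 * (1 + u ^ 2))) / (1 + u ^ 2))).
    auto_derive; nra.
  - intros u _; apply Rle_mult_inv_pos; [left; apply exp_pos | nra].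
Qed.

Lemma sqrt_PI_pos : 0 < sqrt PI.
Proof. apply sqrt_lt_R0, PI_RGT_0. Qed.

Lemma erf_bounds (y : R) : -1 <= erf y <= 1.
Proof.
  assert (Hs := sqrt_PI_pos).
  assert (Hs2 : sqrt PI * sqrt PI = PI) by (apply sqrt_sqrt; left; apply PI_RGT_0).
  assert (Hg := gauss_int_sqr_add_tail y); assert (Ht := gauss_tail_nonneg y).
  assert (He : erf y * sqrt PI = 2 * gauss_int y) by (unfold erf, gauss_int; field; lra).
  assert (Hsq : erf y ^ 2 <= 1).
  { apply (Rmult_le_reg_r PI); [apply PI_RGT_0|].
    rewrite <- Hs2 at 1.
    replace (erf y ^ 2 * (sqrt PI * sqrt PI)) with ((erf y * sqrt PI) ^ 2) by ring.
    rewrite He; lra. }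
  split; nra.
Qed.

Lemma erf_0 : erf 0 = 0.
Proof. unfold erf; fold (gauss_int 0); rewrite gauss_int_0; ring. Qed.

Lemma erf_pos (y : R) : 0 < y -> 0 < erf y.
Proof.
  intros Hy; apply Rmult_lt_0_compat.
  - apply Rdiv_lt_0_compat; [lra | apply sqrt_PI_pos].
  - apply RInt_gt_0; auto; intros; [apply exp_pos | apply continuous_gauss].
Qed.

Lemma erf_nonpos (y : R) : y <= 0 -> erf y <= 0.
Proof.
  intros Hy; unfold erf.
  rewrite <- (opp_RInt_swap (V := R_CompleteNormedModule)) by apply ex_RInt_gauss.
  assert (0 < 2 / sqrt PI) by (apply Rdiv_lt_0_compat; [lra | apply sqrt_PI_pos]).
  assert (0 <= RInt (fun s => exp (- s ^ 2)) y 0).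
  { apply RInt_ge_0; auto; [apply ex_RInt_gauss | intros; left; apply exp_pos]. }
  set (I := RInt (fun s => exp (- s ^ 2)) y 0) in *; unfold opp; simpl; nra.
Qed.

Lemma is_derive_erf (y : R) : is_derive erf y (2 / sqrt PI * exp (- y ^ 2)).
Proof. apply (is_derive_scal gauss_int), is_derive_gauss_int. Qed.

Section ColeHopf.

Variables b D : R.

Lemma is_derive_scaled_ln (f : R -> R) (x l : R) :
  is_derive f x l -> 0 < f x -> is_derive (fun y => / b * ln (f y)) x (/ b * (l / f x)).
Proof.
  intros Hf Hpos; apply is_derive_scal.
  exact (is_derive_comp ln f x _ _ (is_derive_ln _ Hpos) Hf).
Qed.

Hypothesis b_neq0 : b <> 0.

Definition log_transform (V : R -> R -> R) (s y : R) : R := / b * ln (V s y).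

Lemma cole_hopf (V : R -> R -> R) (Vz : R -> R) (t z Vt Vzz : R) :
  (forall y, 0 < V t y) ->
  is_derive (fun s => V s z) t Vt ->
  (forall y, is_derive (V t) y (Vz y)) ->
  is_derive Vz z Vzz ->
  Vt = D * Vzz ->
  ex_derive (fun s => log_transform V s z) t /\ ex_derive (log_transform V t) z /\
  ex_derive (fun y => Derive (log_transform V t) y) z /\
  Derive (fun s => log_transform V s z) t
  = D * Derive (fun y => Derive (log_transform V t) y) z
    + D * b * Derive (log_transform V t) z ^ 2.
Proof.
  intros Hpos Ht Hz Hzz Hheat; set (U := log_transform V).
  assert (HUt := is_derive_scaled_ln (fun s => V s z) t _ Ht (Hpos z)).
  assert (HUz : forall y, is_derive (U t) y (/ b * (Vz y / V t y)))
    by (intros y; apply (is_derive_scaled_ln (V t) y), Hpos; apply Hz).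
  assert (HUzz : is_derive (fun y => Derive (U t) y) z
                   (/ b * ((Vzz * V t z - Vz z * Vz z) / V t z ^ 2))).
  { apply is_derive_ext with (fun y => / b * (Vz y / V t y)).
    - intros y; symmetry; apply is_derive_unique, HUz.
    - apply is_derive_scal.
      exact (is_derive_div Vz (V t) z _ _ Hzz (Hz z) (Rgt_not_eq _ _ (Hpos z))). }
  repeat split; try (eexists; eassumption); [eexists; apply HUz|].
  replace (Derive (fun s => U s z) t) with (/ b * (Vt / V t z))
    by (symmetry; apply is_derive_unique, HUt).
  replace (Derive (fun y => Derive (U t) y) z) with (/ b * ((Vzz * V t z - Vz z * Vz z) / V t z ^ 2))
    by (symmetry; apply is_derive_unique, HUzz).
  replace (Derive (U t) z) with (/ b * (Vz z / V t z)) by (symmetry; apply is_derive_unique, HUz).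
  rewrite Hheat.
  specialize (Hpos z); field; lra.
Qed.

End ColeHopf.

Section TiltedErfc.

Variables (p q e : R -> R) (x dp dq de : R).
Hypotheses (Hp : is_derive p x dp) (Hq : is_derive q x dq) (He : is_derive e x de).
Hypothesis tilt_gauss : e x * exp (- q x ^ 2) = exp (- p x ^ 2).

Lemma is_derive_tilted_erfc :
  is_derive (fun y => e y * (1 - erf (q y))) x
    (de * (1 - erf (q x)) - 2 / sqrt PI * exp (- p x ^ 2) * dq).
Proof.
  replace (de * (1 - erf (q x)) - 2 / sqrt PI * exp (- p x ^ 2) * dq)
    with (de * (1 - erf (q x)) + e x * (0 - dq * (2 / sqrt PI * exp (- q x ^ 2))))
    by (rewrite <- tilt_gauss; ring).
  apply (is_derive_mult e (fun y => 1 - erf (q y))); [exact He | | intros; apply Rmult_comm].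
  apply (is_derive_minus (fun _ => 1)); [apply (is_derive_const 1)|].
  exact (is_derive_comp erf q x _ _ (is_derive_erf _) Hq).
Qed.

Lemma is_derive_erf_add_tilted_erfc :
  is_derive (fun y => erf (p y) + e y * (1 - erf (q y))) x
    (2 / sqrt PI * exp (- p x ^ 2) * (dp - dq) + de * (1 - erf (q x))).
Proof.
  replace (2 / sqrt PI * exp (- p x ^ 2) * (dp - dq) + de * (1 - erf (q x)))
    with (dp * (2 / sqrt PI * exp (- p x ^ 2))
          + (de * (1 - erf (q x)) - 2 / sqrt PI * exp (- p x ^ 2) * dq)) by ring.
  apply (is_derive_plus (fun y => erf (p y))); [|exact is_derive_tilted_erfc].
  exact (is_derive_comp erf p x _ _ (is_derive_erf _) Hp).
Qed.

End TiltedErfc.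

Section ExpU.

Variables sigma b c : R.
Hypothesis sigma_pos : 0 < sigma.

Definition erf_arg (t z : R) : R := (z - c) / (sigma * sqrt (2 * t)).
Definition erfc_arg (t z : R) : R := erf_arg t z - b * sigma * sqrt t / sqrt 2.
Definition tilt (t z : R) : R := exp (- b * (z - c) + b ^ 2 * sigma ^ 2 * t / 2).

Definition expU (t z : R) : R := erf (erf_arg t z) + tilt t z * (1 - erf (erfc_arg t z)).

Definition expU_dz (t z : R) : R := - b * tilt t z * (1 - erf (erfc_arg t z)).
Definition expU_dzz (t z : R) : R :=
  b ^ 2 * tilt t z * (1 - erf (erfc_arg t z))
  + b * (2 / sqrt PI * exp (- erf_arg t z ^ 2)) / (sigma * sqrt (2 * t)).

Lemma erfc_arg_eq (t z : R) : erfc_arg t z = erf_arg t z - b * sigma * sqrt (2 * t) / 2.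
Proof.
  unfold erfc_arg; f_equal.
  destruct (Rle_or_lt 0 t) as [Ht | Ht].
  - assert (H2 : sqrt 2 * sqrt 2 = 2) by (apply sqrt_sqrt; lra).
    assert (0 < sqrt 2) by (apply sqrt_lt_R0; lra).
    rewrite sqrt_mult by lra; set (q := sqrt 2) in *.
    rewrite <- H2; field; lra.
  - rewrite (sqrt_neg_0 t), (sqrt_neg_0 (2 * t)) by lra; unfold Rdiv; ring.
Qed.

Lemma tilt_gauss_erfc_arg (t z : R) :
  0 < t -> tilt t z * exp (- erfc_arg t z ^ 2) = exp (- erf_arg t z ^ 2).
Proof.
  intros Ht; rewrite erfc_arg_eq; unfold tilt, erf_arg; rewrite <- exp_plus; f_equal.
  assert (Hr : sqrt (2 * t) * sqrt (2 * t) = 2 * t) by (apply sqrt_sqrt; lra).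
  assert (0 < sqrt (2 * t)) by (apply sqrt_lt_R0; lra).
  replace t with (sqrt (2 * t) * sqrt (2 * t) / 2) at 1 by lra.
  field; lra.
Qed.

Lemma is_derive_tilt_z (t z : R) : is_derive (tilt t) z (- b * tilt t z).
Proof.
  apply (is_derive_comp exp (fun y => - b * (y - c) + b ^ 2 * sigma ^ 2 * t / 2));
    [apply is_derive_exp | auto_derive; [auto | ring]].
Qed.

Lemma is_derive_tilt_t (t z : R) :
  is_derive (fun s => tilt s z) t (b ^ 2 * sigma ^ 2 / 2 * tilt t z).
Proof.
  apply (is_derive_comp exp (fun s => - b * (z - c) + b ^ 2 * sigma ^ 2 * s / 2));
    [apply is_derive_exp | auto_derive; [auto | field]].
Qed.

Lemma is_derive_erf_arg_z (t z : R) :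
  0 < t -> is_derive (erf_arg t) z (/ (sigma * sqrt (2 * t))).
Proof.
  intros Ht; assert (0 < sqrt (2 * t)) by (apply sqrt_lt_R0; lra).
  unfold erf_arg; auto_derive; [nra | field; nra].
Qed.

Lemma is_derive_erfc_arg_z (t z : R) :
  0 < t -> is_derive (erfc_arg t) z (/ (sigma * sqrt (2 * t))).
Proof.
  intros Ht; assert (0 < sqrt (2 * t)) by (apply sqrt_lt_R0; lra).
  unfold erfc_arg, erf_arg; auto_derive; [nra | field; nra].
Qed.

Lemma is_derive_erf_arg_t (t z : R) :
  0 < t -> is_derive (fun s => erf_arg s z) t (- erf_arg t z / (2 * t)).
Proof.
  intros Ht; assert (0 < sqrt (2 * t)) by (apply sqrt_lt_R0; lra).
  assert (Hr : sqrt (2 * t) * sqrt (2 * t) = 2 * t) by (apply sqrt_sqrt; lra).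
  unfold erf_arg; auto_derive; [repeat split; nra|].
  set (r := sqrt (2 * t)) in *; rewrite <- Hr; field; nra.
Qed.

Lemma is_derive_erfc_arg_t (t z : R) :
  0 < t -> is_derive (fun s => erfc_arg s z) t
             (- erf_arg t z / (2 * t) - b * sigma / (2 * sqrt (2 * t))).
Proof.
  intros Ht; assert (0 < sqrt (2 * t)) by (apply sqrt_lt_R0; lra).
  apply is_derive_ext with (fun s => erf_arg s z - b * sigma * sqrt (2 * s) / 2);
    [intros; symmetry; apply erfc_arg_eq|].
  apply (is_derive_minus (fun s => erf_arg s z)); [apply is_derive_erf_arg_t, Ht|].
  auto_derive; [lra | field; lra].
Qed.

Lemma is_derive_expU_z (t z : R) : 0 < t -> is_derive (expU t) z (expU_dz t z).
Proof.
  intros Ht; unfold expU_dz.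
  replace (- b * tilt t z * (1 - erf (erfc_arg t z))) with
    (2 / sqrt PI * exp (- erf_arg t z ^ 2) * (/ (sigma * sqrt (2 * t)) - / (sigma * sqrt (2 * t)))
     + - b * tilt t z * (1 - erf (erfc_arg t z))) by ring.
  apply is_derive_erf_add_tilted_erfc;
    [apply is_derive_erf_arg_z, Ht | apply is_derive_erfc_arg_z, Ht | apply is_derive_tilt_z
    | apply tilt_gauss_erfc_arg, Ht].
Qed.

Lemma is_derive_expU_zz (t z : R) : 0 < t -> is_derive (expU_dz t) z (expU_dzz t z).
Proof.
  intros Ht; assert (0 < sqrt (2 * t)) by (apply sqrt_lt_R0; lra).
  apply is_derive_ext with (fun y => - b * (tilt t y * (1 - erf (erfc_arg t y))));
    [intros; symmetry; apply Rmult_assoc|].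
  replace (expU_dzz t z) with
    (- b * (- b * tilt t z * (1 - erf (erfc_arg t z))
            - 2 / sqrt PI * exp (- erf_arg t z ^ 2) * / (sigma * sqrt (2 * t))))
    by (unfold expU_dzz; field; generalize sqrt_PI_pos; repeat split; lra).
  apply is_derive_scal, (is_derive_tilted_erfc (erf_arg t));
    [apply is_derive_erfc_arg_z, Ht | apply is_derive_tilt_z | apply tilt_gauss_erfc_arg, Ht].
Qed.

Lemma is_derive_expU_t (t z : R) :
  0 < t -> is_derive (fun s => expU s z) t (sigma ^ 2 / 2 * expU_dzz t z).
Proof.
  intros Ht; assert (0 < sqrt (2 * t)) by (apply sqrt_lt_R0; lra).
  replace (sigma ^ 2 / 2 * expU_dzz t z) with
    (2 / sqrt PI * exp (- erf_arg t z ^ 2)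
       * (- erf_arg t z / (2 * t) - (- erf_arg t z / (2 * t) - b * sigma / (2 * sqrt (2 * t))))
     + b ^ 2 * sigma ^ 2 / 2 * tilt t z * (1 - erf (erfc_arg t z)))
    by (unfold expU_dzz; field; generalize sqrt_PI_pos; repeat split; lra).
  apply (is_derive_erf_add_tilted_erfc (fun s => erf_arg s z) (fun s => erfc_arg s z)
           (fun s => tilt s z));
    [apply is_derive_erf_arg_t, Ht | apply is_derive_erfc_arg_t, Ht | apply is_derive_tilt_t
    | apply tilt_gauss_erfc_arg, Ht].
Qed.

Lemma expU_dz_at_c (t : R) : expU_dz t c = - b * expU t c.
Proof.
  unfold expU_dz, expU, erf_arg; rewrite Rminus_diag, Rdiv_0_l, erf_0; ring.
Qed.

Lemma expU_pos (t z : R) : 0 < b -> 0 < t -> 0 < expU t z.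
Proof.
  intros Hb Ht.
  assert (Ha : 0 < sigma * sqrt (2 * t)) by (apply Rmult_lt_0_compat; [lra | apply sqrt_lt_R0; lra]).
  assert (Htilt : 0 < tilt t z) by apply exp_pos.
  assert (HP := erf_bounds (erf_arg t z)); assert (HQ := erf_bounds (erfc_arg t z)).
  unfold expU; destruct (Rlt_or_le c z) as [Hz | Hz].
  - assert (0 < erf (erf_arg t z)) by (apply erf_pos, Rdiv_lt_0_compat; lra).
    nra.
  - assert (erf (erfc_arg t z) <= 0).
    { apply erf_nonpos; rewrite erfc_arg_eq; unfold erf_arg.
      assert (0 < / (sigma * sqrt (2 * t))) by (apply Rinv_0_lt_compat, Ha).
      assert ((z - c) / (sigma * sqrt (2 * t)) <= 0) by (unfold Rdiv; nra).
      assert (0 < b * sigma * sqrt (2 * t)) by (rewrite Rmult_assoc; apply Rmult_lt_0_compat; lra).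
      lra. }
    assert (1 < tilt t z).
    { unfold tilt; apply Rlt_le_trans with (1 + (- b * (z - c) + b ^ 2 * sigma ^ 2 * t / 2));
        [|apply exp_ineq1_le].
      assert (0 < b ^ 2 * sigma ^ 2 * t) by (apply Rmult_lt_0_compat; [apply Rmult_lt_0_compat|]; nra).
      nra. }
    nra.
Qed.

End ExpU.

Lemma U_eq_log_transform_expU (sigma gamma kappa c : R) :
  U sigma gamma kappa c
  = log_transform (beta sigma gamma kappa) (expU sigma (beta sigma gamma kappa) c).
Proof. reflexivity. Qed.

Theorem proposition3p2 (sigma gamma kappa T c : R) :
  0 < sigma -> 0 < gamma -> 0 < kappa -> 0 < T ->
  (forall t z, 0 < t <= T -> c <= z ->
     ex_derive (fun s => U sigma gamma kappa c s z) t /\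
     ex_derive (fun y => U sigma gamma kappa c t y) z /\
     ex_derive (fun y => dzU sigma gamma kappa c t y) z /\
     dtU sigma gamma kappa c t z =
       sigma ^ 2 / 2 * dzzU sigma gamma kappa c t z
       + gamma ^ 2 / (4 * kappa) * (dzU sigma gamma kappa c t z) ^ 2) /\
  (forall t, 0 < t <= T -> dzU sigma gamma kappa c t c = -1).
Proof.
  intros Hsigma Hgamma Hkappa _.
  unfold dtU, dzzU, dzU; rewrite U_eq_log_transform_expU.
  set (b := beta sigma gamma kappa).
  assert (Hb : 0 < b).
  { unfold b, beta; apply Rdiv_lt_0_compat; [apply pow_lt; lra|].
    apply Rmult_lt_0_compat; [lra | apply pow_lt; lra]. }
  split.
  - intros t z [Ht _] _.
    replace (gamma ^ 2 / (4 * kappa)) with (sigma ^ 2 / 2 * b) by (unfold b, beta; field; lra).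
    apply (cole_hopf b (sigma ^ 2 / 2) (Rgt_not_eq _ _ Hb) (expU sigma b c) (expU_dz sigma b c t)
             t z (sigma ^ 2 / 2 * expU_dzz sigma b c t z) (expU_dzz sigma b c t z));
      [intros; apply expU_pos | apply is_derive_expU_t | intros; apply is_derive_expU_z
      | apply is_derive_expU_zz | reflexivity]; assumption.
  - intros t [Ht _].
    assert (Hpos := expU_pos sigma b c Hsigma t c Hb Ht).
    replace (Derive _ c) with (/ b * (expU_dz sigma b c t c / expU sigma b c t c))
      by (symmetry; apply is_derive_unique, is_derive_scaled_ln, Hpos;
          apply is_derive_expU_z, Ht; exact Hsigma).
    rewrite expU_dz_at_c; field; lra.
Qed.
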